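(* Let $\Delta$ be a root system in a Euclidean space $\mathfrak h^*$ and let $\Delta^0\subset\Delta$ be a root subsystem. Then for every $\alpha\in\Delta$: if there exists $\beta\in\Delta\setminus\Delta^0$ with $(\alpha,\beta)\neq0$, then $\alpha\in\mathrm{span}(\Delta\setminus\Delta^0)$. In particular, if $\Delta$ is irreducible and $\Delta^0$ is a proper subsystem, then $\mathrm{span}(\Delta\setminus\Delta^0)=\mathfrak h^*$.
   Context: A root subsystem of $\Delta$ is a subset $\Delta^0\subset\Delta$ which is itself a root system (in its span). Here $\Delta$ spans $\mathfrak h^*$. *)

From HB Require Import structures.
From mathcomp Require Import all_boot all_order all_algebra.
From mathcomp Require Import reals.
Set Implicit Arguments. Unset Strict Implicit. Unset Printing Implicit Defensive.
Import Order.TTheory GRing.Theory Num.Theory.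
Local Open Scope ring_scope.

(* Euclidean space h^* of dimension n modelled as 'rV[R]_n (R : realType)
   with the standard inner product. *)
Definition dot (R : realType) (n : nat) (u v : 'rV[R]_n) : R := (u *m v^T) 0 0.

Definition refl (R : realType) (n : nat) (a b : 'rV[R]_n) : 'rV[R]_n :=
  b - (2 * dot b a / dot a a) *: a.

(* D is a (crystallographic, not necessarily reduced) root system in its
   own span <<D>>: finite (a seq), no zero vector, stable under the
   reflections s_a (a in D), integral Cartan numbers. *)
Definition root_system (R : realType) (n : nat) (D : seq 'rV[R]_n) : Prop :=
  [/\ 0 \notin D,
      forall a b, a \in D -> b \in D -> refl a b \in D &
      forall a b, a \in D -> b \in D -> 2 * dot b a / dot a a \is a Num.int].

Definition root_subsystem (R : realType) (n : nat) (D0 D : seq 'rV[R]_n) : Prop :=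
  {subset D0 <= D} /\ root_system D0.

Definition irreducible_rs (R : realType) (n : nat) (D : seq 'rV[R]_n) : Prop :=
  D != [::] /\
  ~ (exists P : pred 'rV[R]_n,
        [/\ exists2 a, a \in D & P a,
            exists2 a, a \in D & ~~ P a &
            forall a b, a \in D -> b \in D -> P a -> ~~ P b -> dot a b = 0]).

From HB Require Import structures.
From mathcomp Require Import all_boot all_order all_algebra.
From mathcomp Require Import reals.
From mathcomp Require Import ring.
Set Implicit Arguments. Unset Strict Implicit. Unset Printing Implicit Defensive.
Import Order.TTheory GRing.Theory Num.Theory.
Local Open Scope ring_scope.

(* If a is a root of the subsystem and b a root outside it with (a, b) <> 0,
   then s_a(b) is again outside the subsystem, and a is a nonzero multiple of
   b - s_a(b); so a lies in the span of the complement.  Consequently every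
   root outside that span is orthogonal to the complement, hence to its span,
   and for irreducible D this orthogonal splitting of D must be trivial. *)

Section InnerProduct.
Variables (R : realType) (n : nat).
Implicit Types (a b u v w : 'rV[R]_n).

Lemma dotC u v : dot u v = dot v u.
Proof.
rewrite /dot; have -> : (u *m v^T) 0 0 = (u *m v^T)^T 0 0 by rewrite [in RHS]mxE.
by rewrite trmx_mul trmxK.
Qed.

Lemma dotDr u v w : dot u (v + w) = dot u v + dot u w.
Proof. by rewrite /dot linearD /= mulmxDr mxE. Qed.

Lemma dotZr u k v : dot u (k *: v) = k * dot u v.
Proof. by rewrite /dot linearZ /= -scalemxAr mxE. Qed.

Lemma dot0r u : dot u 0 = 0.
Proof. by rewrite -(scale0r (0 : 'rV[R]_n)) dotZr mul0r. Qed.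

Lemma dotZl u k v : dot (k *: v) u = k * dot v u.
Proof. by rewrite dotC dotZr dotC. Qed.

Lemma dotBl u v w : dot (v - w) u = dot v u - dot w u.
Proof. by rewrite dotC dotDr -scaleN1r dotZr mulN1r !(dotC u). Qed.

Lemma dot_self_eq0 u : (dot u u == 0) = (u == 0).
Proof.
apply/idP/idP => [|/eqP->]; last by rewrite dot0r.
rewrite /dot mxE => /eqP sum_sq0.
have sq_ge0 j : true -> 0 <= u 0 j * u^T j 0 by rewrite mxE -expr2 sqr_ge0.
have entry_sq0 := psumr_eq0P sq_ge0 sum_sq0.
apply/eqP/rowP => j; have /eqP := entry_sq0 j isT.
by rewrite !mxE mulf_eq0 orbb => /eqP.
Qed.

Lemma dot_span_eq0 u (X : seq 'rV[R]_n) v :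
  (forall x, x \in X -> dot u x = 0) -> v \in <<X>>%VS -> dot u v = 0.
Proof.
move=> uX; rewrite -[X]/(tval (in_tuple X)) => /coord_span->.
rewrite (big_morph (dot u) (dotDr u) (dot0r u)).
by apply: big1 => i _; rewrite dotZr uX ?mulr0 // mem_nth.
Qed.

Lemma refl_invol a b : a != 0 -> refl a (refl a b) = b.
Proof.
rewrite -dot_self_eq0 => aa; rewrite /refl dotBl dotZl.
set c := 2 * dot b a / dot a a.
have -> : 2 * (dot b a - c * dot a a) / dot a a = - c by rewrite /c; field.
by rewrite scaleNr opprK subrK.
Qed.

Lemma mem_span_refl a b (V : {vspace 'rV[R]_n}) :
  a != 0 -> dot a b != 0 -> b \in V -> refl a b \in V -> a \in V.
Proof.
rewrite -dot_self_eq0 => aa ab bV rbV.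
set c := 2 * dot b a / dot a a.
have c0 : c != 0 by rewrite !mulf_neq0 ?pnatr_eq0 ?invr_eq0 // dotC.
have -> : a = c^-1 *: (b - refl a b).
  by rewrite /refl opprB addrC subrK scalerA mulVf // scale1r.
exact/memvZ/memvB.
Qed.

End InnerProduct.

Section Complement.
Variables (R : realType) (n : nat) (D D0 : seq 'rV[R]_n).
Hypothesis D_refl : forall a b, a \in D -> b \in D -> refl a b \in D.
Hypothesis D0_sub : {subset D0 <= D}.
Hypothesis D0_neq0 : 0 \notin D0.
Hypothesis D0_refl : forall a b, a \in D0 -> b \in D0 -> refl a b \in D0.

Let S := [seq x <- D | x \notin D0].

Lemma refl_complement a b : a \in D0 -> b \in S -> refl a b \in S.
Proof.
have a_neq0 : a \in D0 -> a != 0 by apply: contraTneq => ->.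
move=> aD0; rewrite !mem_filter => /andP[bD0 bD].
rewrite D_refl ?(D0_sub aD0) // andbT; apply: contra bD0 => rbD0.
by rewrite -(refl_invol b (a_neq0 aD0)) D0_refl.
Qed.

Lemma mem_span_complement a :
  a \in D -> (exists2 b, b \in S & dot a b != 0) -> a \in <<S>>%VS.
Proof.
move=> aD [b bS ab]; have [aD0|aD0] := boolP (a \in D0); last first.
  by apply: memv_span; rewrite mem_filter aD0 aD.
have a_neq0 : a != 0 by apply: contraNneq D0_neq0 => <-.
by apply: (mem_span_refl a_neq0 ab); apply: memv_span; rewrite ?refl_complement.
Qed.

Lemma dot_span_complement a v :
  a \in D -> a \notin <<S>>%VS -> v \in <<S>>%VS -> dot a v = 0.
Proof.
move=> aD aS; apply: dot_span_eq0 => x xS; apply/eqP.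
by apply: contraNT aS => ax; apply: mem_span_complement => //; exists x.
Qed.

Lemma span_complement_full :
  <<D>>%VS = fullv -> irreducible_rs D -> (exists2 a, a \in D & a \notin D0) ->
  <<S>>%VS = fullv.
Proof.
move=> spanD [_ irrD] [a aD aD0].
apply/eqP; rewrite eqEsubv subvf -spanD; apply/span_subvP.
have [/allP//|/allPn[b bD bS]] := boolP (all (mem <<S>>%VS) D).
exfalso; apply: irrD; exists (mem <<S>>%VS); split.
- by exists a => //; apply: memv_span; rewrite mem_filter aD0 aD.
- by exists b.
- by move=> x y xD yD xS yS; rewrite dotC (dot_span_complement yD).
Qed.

End Complement.

Theorem lemma3p4 (R : realType) (n : nat) (D D0 : seq 'rV[R]_n) :
  root_system D -> <<D>>%VS = fullv -> root_subsystem D0 D ->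
  (forall a, a \in D ->
     (exists2 b, b \in [seq x <- D | x \notin D0] & dot a b != 0) ->
     a \in <<[seq x <- D | x \notin D0]>>%VS)
  /\
  (irreducible_rs D -> (exists2 a, a \in D & a \notin D0) ->
     <<[seq x <- D | x \notin D0]>>%VS = fullv).
Proof.
move=> [_ D_refl _] spanD [D0_sub [D0_neq0 D0_refl _]].
split; first exact: mem_span_complement.
exact: span_complement_full.
Qed.
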